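(* For every integer $r\ge 1$, every line passing through two distinct points of $P_r$ has slope at most the slope of $\ell_r$; that is, among the lines passing through two points of $P_r$, $\ell_r$ is the line with the largest slope.
   Context: Define finite sets $P_r\subset\mathbb{Z}^2$ for integers $r\ge 0$ recursively: $P_0:=\{(0,0)\}$; for $r\ge 1$, $L_r:=P_{r-1}$, $R_r:=\{(x+\delta_r,\,y+\delta_r'):(x,y)\in L_r\}$ and $P_r:=L_r\cup R_r$, where $\delta_r:=3\cdot 4^{r-1}$ and $\delta_r':=(3r+1)\cdot 4^{r-1}$. For $r\ge 1$, let $p_r$ be the rightmost point (largest $x$-coordinate) of $L_r$, let $q_r$ be the leftmost point (smallest $x$-coordinate) of $R_r$, and let $\ell_r$ be the straight line through $p_r$ and $q_r$. *)

From mathcomp Require Import all_boot all_order all_algebra.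
Set Implicit Arguments. Unset Strict Implicit. Unset Printing Implicit Defensive.
Import Order.TTheory GRing.Theory Num.Theory.
Local Open Scope ring_scope.

Definition point := (int * int)%type.

Definition delta (r : nat) : int := (3 * 4 ^ r.-1)%N%:Z.
Definition delta' (r : nat) : int := ((3 * r + 1) * 4 ^ r.-1)%N%:Z.

Definition shift (r : nat) (z : point) : point := (z.1 + delta r, z.2 + delta' r).

Fixpoint P (r : nat) : seq point :=
  match r with
  | 0%N => [:: (0, 0)]
  | r'.+1 => P r' ++ map (shift r'.+1) (P r')
  end.

Definition L (r : nat) : seq point := P r.-1.
Definition R (r : nat) : seq point := map (shift r) (P r.-1).

(* slope of the line through a and b (meaningful when a.1 <> b.1) *)
Definition slope (a b : point) : rat :=
  ((b.2 - a.2)%:~R : rat) / ((b.1 - a.1)%:~R : rat).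

(* The points of P m have pairwise distinct abscissae in [0, 4^m). For d >= 0 and
   (3m+1) d <= 3n the functional n x - d y is minimal on P m at the origin and maximal
   at its rightmost point, because every shift by (delta, delta') increases it.
   Choosing n / d to be the slope of l_(m+1) bounds the slope of every pair split
   between L and R; a pair inside one half is a translate of a pair of P m, whose
   slopes are bounded, by induction, by the smaller slope of l_m. *)

From mathcomp Require Import all_boot all_order all_algebra.
From mathcomp Require Import zify ring.
Set Implicit Arguments. Unset Strict Implicit. Unset Printing Implicit Defensive.
Import Order.TTheory GRing.Theory Num.Theory.
Local Open Scope ring_scope.

Lemma deltaS m : delta m.+1 = 3 * (4 ^ m)%:Z.
Proof. by rewrite /delta /= PoszM. Qed.

Lemma delta'S m : delta' m.+1 = (3 * m%:Z + 4) * (4 ^ m)%:Z.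
Proof. by rewrite /delta' /= PoszM; congr (_ * _); lia. Qed.

Lemma pow4S m : (4 ^ m.+1)%:Z = 4 * (4 ^ m)%:Z.
Proof. by rewrite expnS PoszM. Qed.

Lemma pow4_gt0 m : 0 < (4 ^ m)%:Z.
Proof. by rewrite ltz_nat expn_gt0. Qed.

Definition corner (m : nat) : point := ((4 ^ m)%:Z - 1, m%:Z * (4 ^ m)%:Z).

Lemma shift_corner m : shift m.+1 (corner m) = corner m.+1.
Proof. by rewrite /shift /corner /= deltaS delta'S pow4S; congr (_, _); lia. Qed.

Lemma origin_in_P m : (0, 0) \in P m.
Proof. by elim: m => [|m IH] //=; rewrite mem_cat IH. Qed.

Lemma corner_in_P m : corner m \in P m.
Proof.
by elim: m => [|m IH] //=; rewrite -shift_corner mem_cat map_f ?orbT.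
Qed.

Lemma P_linear_bounds m (n d : int) z :
  0 <= d -> (3 * m%:Z + 1) * d <= 3 * n -> z \in P m ->
  0 <= n * z.1 - d * z.2 <= n * (corner m).1 - d * (corner m).2.
Proof.
move=> d_ge0; elim: m z => [|m IH] z hnd.
  by rewrite inE => /eqP ->; rewrite /corner /= expn0 !mulr0 subrr lexx.
have hnd' : (3 * m%:Z + 1) * d <= 3 * n by lia.
have T_gt0 := pow4_gt0 m.
have shift_gap : 0 <= (3 * n - (3 * m%:Z + 4) * d) * (4 ^ m)%:Z.
  by apply: mulr_ge0; lia.
have f_shift w : n * (shift m.+1 w).1 - d * (shift m.+1 w).2
    = n * w.1 - d * w.2 + (3 * n - (3 * m%:Z + 4) * d) * (4 ^ m)%:Z.
  by rewrite /shift /= deltaS delta'S; ring.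
rewrite -shift_corner f_shift mem_cat => /orP [hz | /mapP [[w1 w2] hw ->]].
  have /andP [lo hi] := IH z hnd' hz.
  by apply/andP; split; lia.
have /andP [lo hi] := IH _ hnd' hw.
by rewrite f_shift addr_ge0 // lerD2r.
Qed.

Lemma P_fst_bounds m z : z \in P m -> 0 <= z.1 <= (4 ^ m)%:Z - 1.
Proof.
move=> hz; have := @P_linear_bounds m 1 0 z (lexx 0) _ hz.
by rewrite /corner /= !mul0r !subr0 !mul1r; apply; rewrite mulr0.
Qed.

Lemma P_fst_inj m : {in P m &, injective (@fst int int)}.
Proof.
elim: m => [|m IH] /= z w; first by rewrite !inE => /eqP -> /eqP ->.
have T_gt0 := pow4_gt0 m.
rewrite !mem_cat => /orP [hz | /mapP [z' hz' ->]] /orP [hw | /mapP [w' hw' ->]].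
- exact: IH.
- by move: (P_fst_bounds hz) (P_fst_bounds hw'); rewrite /shift /= deltaS; lia.
- by move: (P_fst_bounds hz') (P_fst_bounds hw); rewrite /shift /= deltaS; lia.
- by rewrite /shift /= => /addIr e; rewrite (IH _ _ hz' hw' e).
Qed.

(* [slope_bound m] is the slope of l_(m+1), see [slope_corner_origin]. *)
Definition slope_bound (m : nat) : rat :=
  ((2 * m%:Z + 4) * (4 ^ m)%:Z)%:~R / (2 * (4 ^ m)%:Z + 1)%:~R.

Definition slopes_le (s : seq point) (c : rat) :=
  {in s &, forall a b, a.1 < b.1 -> slope a b <= c}.

Lemma slope_sym a b : slope a b = slope b a.
Proof. by rewrite /slope -(opprB b.2) -(opprB b.1) !intrN invrN mulrNN. Qed.

Lemma slope_shift r a b : slope (shift r a) (shift r b) = slope a b.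
Proof. by rewrite /slope /shift /=; congr (_%:~R / _%:~R); ring. Qed.

Lemma ler_ratio (x y u v : int) : 0 < y -> 0 < v -> x * v <= u * y ->
  x%:~R / y%:~R <= u%:~R / v%:~R :> rat.
Proof.
move=> y_gt0 v_gt0 h.
rewrite ler_pdivrMr ?ltr0z // mulrAC ler_pdivlMr ?ltr0z //.
by rewrite -!intrM ler_int.
Qed.

Lemma slope_le_ratio (a b : point) (u v : int) :
  a.1 < b.1 -> 0 < v -> (b.2 - a.2) * v <= u * (b.1 - a.1) ->
  slope a b <= u%:~R / v%:~R.
Proof. by rewrite -subr_gt0; apply: ler_ratio. Qed.

Lemma slope_corner_origin m :
  slope (corner m) (shift m.+1 (0, 0)) = slope_bound m.
Proof.
by rewrite /slope /slope_bound /shift /corner /= deltaS delta'S; congr (_%:~R / _%:~R); ring.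
Qed.

Lemma slope_bound_le m : slope_bound m <= slope_bound m.+1.
Proof.
have T_gt0 := pow4_gt0 m.
rewrite /slope_bound pow4S; apply: ler_ratio; nia.
Qed.

Lemma slope_cross_le m a b : a \in P m -> b \in P m ->
  slope a (shift m.+1 b) <= slope_bound m.
Proof.
move=> ha hb; have T_gt0 := pow4_gt0 m.
have m_lt_T : m%:Z < (4 ^ m)%:Z by rewrite ltz_nat ltn_expl.
set T := (4 ^ m)%:Z in T_gt0 m_lt_T *.
set n := (2 * m%:Z + 4) * T; set d := 2 * T + 1.
have hnd : (3 * m%:Z + 1) * d <= 3 * n by rewrite /n /d; nia.
have d_ge0 : 0 <= d by rewrite /d; lia.
have /andP [_ max_a] := P_linear_bounds d_ge0 hnd ha.
have /andP [min_b _] := P_linear_bounds d_ge0 hnd hb.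
(* The corner of P m and the shifted origin lie on a line of slope n / d. *)
have tight : n * (T - 1) - d * (m%:Z * T) = 3 * n * T - d * ((3 * m%:Z + 4) * T).
  by rewrite /n /d; ring.
have := P_fst_bounds ha; have := P_fst_bounds hb.
move: a b ha hb max_a min_b => [x y] [x' y'] _ _ /=.
rewrite /corner /shift /= deltaS delta'S -/T => max_a min_b hxb hxa.
by apply: slope_le_ratio => /=; rewrite -/T -/n -/d; lia.
Qed.

Lemma slopes_le_P0 c : slopes_le (P 0) c.
Proof. by move=> a b; rewrite !inE => /eqP -> /eqP ->; rewrite ltxx. Qed.

Lemma slopes_le_PS m c :
  slopes_le (P m) c -> c <= slope_bound m -> slopes_le (P m.+1) (slope_bound m).
Proof.
move=> hc c_le a b /=.
rewrite !mem_cat => /orP [ha | /mapP [a' ha' ->]] /orP [hb | /mapP [b' hb' ->]] ab.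
- exact: le_trans (hc a b ha hb ab) c_le.
- exact: slope_cross_le.
- move: (P_fst_bounds ha') (P_fst_bounds hb) ab (pow4_gt0 m).
  by rewrite /shift /= deltaS; lia.
- by rewrite slope_shift; apply: le_trans (hc a' b' ha' hb' _) c_le; move: ab => /=; lia.
Qed.

Lemma slopes_le_P m : slopes_le (P m.+1) (slope_bound m).
Proof.
elim: m => [|m IH]; first exact: slopes_le_PS (slopes_le_P0 _) (lexx _).
exact: slopes_le_PS IH (slope_bound_le m).
Qed.

Theorem lemma1 (r : nat) (hr : (1 <= r)%N) (p q : point)
  (hp : p \in L r) (hpmax : forall z, z \in L r -> z.1 <= p.1)
  (hq : q \in R r) (hqmin : forall z, z \in R r -> q.1 <= z.1) :
  forall a b : point, a \in P r -> b \in P r -> a <> b ->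
    a.1 <> b.1 /\ slope a b <= slope p q.
Proof.
case: r hr hp hpmax hq hqmin => [//|m] _; rewrite /L /R /= => hp hpmax hq hqmin.
have -> : p = corner m.
  apply: (P_fst_inj hp (corner_in_P m)).
  by have := hpmax _ (corner_in_P m); have := P_fst_bounds hp; rewrite /corner /=; lia.
case/mapP: hq hqmin => [[q1 q2] hq' ->] hqmin.
have -> : (q1, q2) = (0, 0).
  apply: (P_fst_inj hq' (origin_in_P m)).
  have := hqmin _ (map_f (shift m.+1) (origin_in_P m)).
  by have := P_fst_bounds hq'; rewrite /shift /=; lia.
rewrite slope_corner_origin => a b ha hb ab.
have fst_neq : a.1 <> b.1 by move=> e; exact/ab/(@P_fst_inj m.+1 a b ha hb e).
split=> //; case: (ltgtP a.1 b.1) => [||//].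
- exact: slopes_le_P.
- by rewrite slope_sym; apply: slopes_le_P.
Qed.
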